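(* Let $n,\lambda,\mu$ be positive integers with $\mu>\lambda$, and let $\mathcal{A}$ be a path decomposition of $\lambda K_n$. Then $\lambda K_n$ is $2$-extendible with respect to $(\mathcal{A},\mu K_n)$ if and only if $2|\mathcal{S}_0(\mathcal{A})|+|\mathcal{S}_1(\mathcal{A})|\le(\mu-\lambda)\frac{n(n-1)}{2}$.
   Context: Graphs may have multiple edges. $\lambda K_n$ is the loopless multigraph on $n$ vertices with every pair of distinct vertices joined by exactly $\lambda$ edges; $\lambda K_n$ is regarded as a subgraph of $\mu K_n$ on the same vertex set, and $\mu K_n\setminus\lambda K_n$ denotes the graph obtained by deleting the edges of $\lambda K_n$. A decomposition of size $k$ of a graph $G$ is an ordered $k$-tuple $(G(1),\dots,G(k))$ of spanning subgraphs of $G$ (colour classes; possibly edgeless) with pairwise disjoint edge sets whose union is $E(G)$. A path decomposition is one in which every colour class is a vertex-disjoint union of paths and cycles (two parallel edges form a cycle of length 2). $\mathcal{S}_i(\mathcal{A})$ is the set of colour classes of $\mathcal{A}$ with exactly $i$ edges. For a graph $G\subseteq H$, a path decomposition $\mathcal{A}$ of $G$ with $k$ colour classes and a positive integer $\alpha$, $G$ is $\alpha$-extendible with respect to $(\mathcal{A},H)$ if there is a graph $F\subseteq H\setminus G$ and a path decomposition $\mathcal{A}^*$ of $G\cup F$ of size $k$ whose restriction to $G$ is $\mathcal{A}$ and each $\mathcal{A}^*(i)$ has at least $\alpha$ edges. *)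

From mathcomp Require Import all_boot.
Set Implicit Arguments. Unset Strict Implicit. Unset Printing Implicit Defensive.

(* Edges of mu K_n on vertex set 'I_n: triples ((u, v), j) with u < v and
   j < mu; j indexes the mu parallel edges joining u and v. *)
Definition edge (n mu : nat) := {t : 'I_n * 'I_n * 'I_mu | t.1.1 < t.1.2}.

Definition eu n mu (e : edge n mu) : 'I_n := (val e).1.1.
Definition ev n mu (e : edge n mu) : 'I_n := (val e).1.2.

Definition joins n mu (e : edge n mu) (x y : 'I_n) : bool :=
  ((eu e == x) && (ev e == y)) || ((eu e == y) && (ev e == x)).

(* lambda K_n as a subgraph (edge set) of mu K_n: the parallel edges of
   index < lambda between each pair of distinct vertices. *)
Definition lamK n mu (lam : nat) : {set edge n mu} :=
  [set e : edge n mu | (val e).2 < lam].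

Definition trail n mu (es : seq (edge n mu)) (vs : seq 'I_n) : bool :=
  [&& 0 < size es, size vs == (size es).+1, uniq es &
      all (fun p => joins p.1 p.2.1 p.2.2) (zip es (zip vs (behead vs)))].

Definition is_path n mu (es : seq (edge n mu)) (vs : seq 'I_n) : bool :=
  trail es vs && uniq vs.

(* a cycle (of length >= 2; length 2 = two parallel edges): a closed trail
   v_0 .. v_m = v_0 whose vertices v_1 .. v_m are pairwise distinct *)
Definition is_cycle n mu (es : seq (edge n mu)) (vs : seq 'I_n) : bool :=
  [&& trail es vs, 1 < size es &
      match vs with x :: tl => uniq tl && (last x tl == x) | [::] => false end].

Definition paths_and_cycles n mu (C : {set edge n mu}) : Prop :=
  exists comps : seq (seq (edge n mu) * seq 'I_n),
    [/\ all (fun c => is_path c.1 c.2 || is_cycle c.1 c.2) comps,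
        uniq (flatten (map (fun c => c.1) comps)),
        C = [set e in flatten (map (fun c => c.1) comps)] &
        uniq (flatten (map (fun c => undup c.2) comps))].

Definition decomposition n mu (G : {set edge n mu}) k
    (A : 'I_k -> {set edge n mu}) : Prop :=
  (forall i j, i != j -> [disjoint A i & A j]) /\
  \bigcup_(i < k) A i = G.

Definition path_decomposition n mu (G : {set edge n mu}) k
    (A : 'I_k -> {set edge n mu}) : Prop :=
  decomposition G A /\ forall i, paths_and_cycles (A i).

(* number of colour classes with exactly i edges: |S_i(A)| (classes are
   counted as indexed members of the k-tuple) *)
Definition nS n mu k (A : 'I_k -> {set edge n mu}) (i : nat) : nat :=
  #|[set c : 'I_k | #|A c| == i]|.

Definition extendible n mu (alpha : nat) (G H : {set edge n mu}) k
    (A : 'I_k -> {set edge n mu}) : Prop :=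
  exists (F : {set edge n mu}) (Astar : 'I_k -> {set edge n mu}),
    [/\ F \subset H :\: G,
        path_decomposition (G :|: F) Astar,
        forall i, Astar i :&: G = A i &
        forall i, alpha <= #|Astar i|].

(* A colour class with at least two edges needs no new edge, one with a single
   edge needs one and an empty one needs two; since any two edges of mu K_n form
   a path of length two, a 2-cycle or two disjoint edges, adding them keeps every
   class a union of paths and cycles.  So 2-extendibility amounts to choosing
   pairwise disjoint sets of 2 - |A(i)| edges outside lambda K_n, i.e. among
   (mu - lambda) C(n,2) edges, which is possible exactly when the total demand
   2|S_0| + |S_1| fits. *)

From mathcomp Require Import all_boot.
Set Implicit Arguments. Unset Strict Implicit. Unset Printing Implicit Defensive.

Section DisjointSubsets.
Variables (I T : finType).

Lemma subset_of_card (C : {set T}) m :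
  m <= #|C| -> exists2 D : {set T}, D \subset C & #|D| = m.
Proof.
move=> le_m_C; exists [set x in take m (enum C)].
  by apply/subsetP => x; rewrite inE => /mem_take; rewrite mem_enum.
rewrite cardsE; have /card_uniqP-> : uniq (take m (enum C)) by rewrite take_uniq ?enum_uniq.
by rewrite size_take -cardE; case: ltngtP le_m_C.
Qed.

Lemma card_bigcup_disjoint (B : I -> {set T}) (r : seq I) :
  uniq r -> {in r &, forall i j, i != j -> [disjoint B i & B j]} ->
  #|\bigcup_(i <- r) B i| = \sum_(i <- r) #|B i|.
Proof.
elim: r => [|a r IHr] /=; first by rewrite !big_nil cards0.
case/andP => a_r uniq_r disB; rewrite !big_cons cardsU.
rewrite IHr //; last by move=> i j ir jr; apply: disB; rewrite inE ?ir ?jr orbT.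
suff /disjoint_setI0-> : [disjoint B a & \bigcup_(i <- r) B i] by rewrite cards0 subn0.
rewrite bigcup_seq; apply: bigcup_disjoint => i ir; apply: disB.
- exact: mem_head.
- by rewrite inE ir orbT.
- by apply: contraNneq a_r => ->.
Qed.

Lemma leq_sum_card_disjoint (B : I -> {set T}) (C : {set T}) :
  (forall i, B i \subset C) -> (forall i j, i != j -> [disjoint B i & B j]) ->
  \sum_i #|B i| <= #|C|.
Proof.
move=> BC disB; rewrite -card_bigcup_disjoint ?index_enum_uniq //.
  by apply: subset_leq_card; apply/bigcupsP => i _.
by move=> i j _ _; apply: disB.
Qed.

Lemma disjoint_subsets_of_card (d : I -> nat) (C : {set T}) :
  \sum_i d i <= #|C| ->
  exists Fs : I -> {set T},
    [/\ forall i, Fs i \subset C, forall i, #|Fs i| = d i &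
        forall i j, i != j -> [disjoint Fs i & Fs j]].
Proof.
suff: forall r : seq I, \sum_(i <- r) d i <= #|C| ->
  exists Fs : I -> {set T},
    [/\ forall i, Fs i \subset C, forall i, i \in r -> #|Fs i| = d i &
        forall i j, i != j -> [disjoint Fs i & Fs j]].
  move=> exFs /exFs[Fs [FsC cardFs disFs]].
  by exists Fs; split=> // i; rewrite cardFs ?mem_index_enum.
move=> r; elim: r C => [|a r IHr] C /=.
  by exists (fun=> set0); split=> [i|i|i j _]; rewrite ?sub0set // -setI_eq0 set0I.
rewrite big_cons => le_C.
have [D DC cardD] := subset_of_card (leq_trans (leq_addr _ _) le_C).
have le_CD : \sum_(i <- r) d i <= #|C :\: D|.
  by rewrite cardsDS // cardD leq_subRL // (leq_trans (leq_addr _ _) le_C).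
have [Fs [FsC cardFs disFs]] := IHr _ le_CD.
have disDFs i : [disjoint D & Fs i].
  by have := FsC i; rewrite subsetD disjoint_sym => /andP[].
exists (fun i => if i == a then D else Fs i); split.
- by move=> i; case: eqP => // _; apply: subset_trans (FsC i) (subsetDl _ _).
- by move=> i; rewrite inE; case: eqP => [->|_] //=; apply: cardFs.
- move=> i j neq_ij.
  case: (eqVneq i a) => [eq_ia|_]; case: (eqVneq j a) => [eq_ja|_].
  + by rewrite eq_ia eq_ja eqxx in neq_ij.
  + exact: disDFs.
  + by rewrite disjoint_sym.
  + exact: disFs.
Qed.
End DisjointSubsets.

Section TwoEdges.
Variables n mu : nat.
Implicit Types (e : edge n mu) (x y z w : 'I_n).

Definition ends e : seq 'I_n := [:: eu e; ev e].

Lemma joinsE e x y : joins e x y = [&& x \in ends e, y \in ends e & x != y].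
Proof.
rewrite /joins !inE; have : eu e != ev e by rewrite neq_ltn (valP e).
move: (eu e) (ev e) => u v neq_uv.
apply/idP/and3P => [/orP[]/andP[/eqP<- /eqP<-] | [/orP[]/eqP-> /orP[]/eqP->]].
all: rewrite ?eqxx ?orbT ?orTb ?andbT //=; by try split; rewrite // eq_sym.
Qed.

Lemma joins_sym e x y : joins e x y = joins e y x.
Proof. by rewrite !joinsE andbCA eq_sym. Qed.

Lemma joins_eu_ev e : joins e (eu e) (ev e).
Proof. by rewrite joinsE !inE !eqxx orbT neq_ltn (valP e). Qed.

Lemma joins_other_end e x : x \in ends e -> exists y, joins e x y.
Proof.
rewrite !inE => /orP[] /eqP->; first by exists (ev e); apply: joins_eu_ev.
by exists (eu e); rewrite joins_sym joins_eu_ev.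
Qed.

Lemma joins_neq e x y : joins e x y -> x != y.
Proof. by rewrite joinsE => /and3P[]. Qed.

Lemma paths_and_cycles_path2 e1 e2 x y z :
  e1 != e2 -> joins e1 x y -> joins e2 y z -> x != z ->
  paths_and_cycles [set e1; e2].
Proof.
move=> e12 j1 j2 xz; have xy := joins_neq j1; have yz := joins_neq j2.
exists [:: ([:: e1; e2], [:: x; y; z])]; split.
- by rewrite /= /is_path /trail /= j1 j2 !inE e12 (negbTE xy) (negbTE xz) yz.
- by rewrite /= inE e12.
- by apply/setP => e; rewrite !inE.
- by rewrite /= !inE (negbTE xy) (negbTE xz) (negbTE yz) /= !inE (negbTE xy) (negbTE xz) yz.
Qed.

Lemma paths_and_cycles_cycle2 e1 e2 x y :
  e1 != e2 -> joins e1 x y -> joins e2 y x -> paths_and_cycles [set e1; e2].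
Proof.
move=> e12 j1 j2; have xy := joins_neq j1; have yx := joins_neq j2.
exists [:: ([:: e1; e2], [:: x; y; x])]; split.
- by rewrite /= /is_cycle /trail /= j1 j2 !mem_seq1 e12 yx eqxx orbT.
- by rewrite /= inE e12.
- by apply/setP => e; rewrite !inE.
- by rewrite /= !inE (negbTE xy) eqxx /= (negbTE yx) /= inE yx.
Qed.

Lemma paths_and_cycles_matching2 e1 e2 x y z w :
  e1 != e2 -> joins e1 x y -> joins e2 z w ->
  x \notin [:: z; w] -> y \notin [:: z; w] -> paths_and_cycles [set e1; e2].
Proof.
move=> e12 j1 j2 xzw yzw; have xy := joins_neq j1; have zw := joins_neq j2.
exists [:: ([:: e1], [:: x; y]); ([:: e2], [:: z; w])]; split.
- by rewrite /= /is_path /trail /= j1 j2 !inE xy zw.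
- by rewrite /= !inE e12.
- by apply/setP => e; rewrite !inE.
- move: xzw yzw; rewrite /= !inE (negbTE xy) (negbTE zw) /= !inE.
  by rewrite (negbTE xy) (negbTE zw) => -> ->.
Qed.

Lemma paths_and_cycles_card2 (C : {set edge n mu}) :
  #|C| = 2 -> paths_and_cycles C.
Proof.
move/eqP/cards2P => [e1 [e2 [e12 ->]]].
have j1 := joins_eu_ev e1; set x := eu e1 in j1 *; set y := ev e1 in j1 *.
have end2 z w : joins e2 z w -> w \in ends e2 by rewrite joinsE => /and3P[].
case x2 : (x \in ends e2); case y2 : (y \in ends e2).
- apply: (paths_and_cycles_cycle2 e12 j1).
  by rewrite joinsE x2 y2 eq_sym (joins_neq j1).
- have [z j2] := joins_other_end x2; rewrite joins_sym in j1.
  apply: (paths_and_cycles_path2 e12 j1 j2).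
  by apply: contraFneq y2 => ->; apply: end2 j2.
- have [z j2] := joins_other_end y2.
  apply: (paths_and_cycles_path2 e12 j1 j2).
  by apply: contraFneq x2 => ->; apply: end2 j2.
- exact: (paths_and_cycles_matching2 e12 j1 (joins_eu_ev e2) (negbT x2) (negbT y2)).
Qed.
End TwoEdges.

Lemma card_ord_ltn m a : a <= m -> #|[set j : 'I_m | j < a]| = a.
Proof.
move=> le_am; have inj_widen : injective (widen_ord le_am).
  by move=> i j [] /val_inj.
rewrite -[RHS]card_ord -cardsT -(card_imset _ inj_widen).
apply: eq_card => j; rewrite inE.
apply/idP/imsetP => [lt_ja | [i _ ->]]; last exact: (ltn_ord i).
by exists (Ordinal lt_ja); rewrite ?inE //; apply: val_inj.
Qed.

Lemma card_ord_geq m a : a <= m -> #|[set j : 'I_m | a <= j]| = m - a.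
Proof.
move=> le_am; have -> : [set j : 'I_m | a <= j] = ~: [set j : 'I_m | j < a].
  by apply/setP => j; rewrite !inE -leqNgt.
by rewrite cardsCs setCK card_ord card_ord_ltn.
Qed.

Lemma card_ltn_pairs n : #|[set p : 'I_n * 'I_n | p.1 < p.2]| = 'C(n, 2).
Proof.
rewrite -[LHS]muln1 -sum_nat_cond_const big_mkcond /=.
rewrite -(pair_big xpredT xpredT (fun u v : 'I_n => if u < v then 1 else 0)).
rewrite exchange_big -bin2_sum big_mkord; apply: eq_bigr => v _.
rewrite -big_mkcond sum_nat_cond_const muln1.
exact: card_ord_ltn (ltnW (ltn_ord v)).
Qed.

Lemma card_setC_lamK n mu lam : lam <= mu ->
  #|~: lamK n mu lam| = (mu - lam) * 'C(n, 2).
Proof.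
move=> le_lam_mu; rewrite -(card_imset _ val_inj).
have -> : val @: (~: lamK n mu lam) =
    setX [set p : 'I_n * 'I_n | p.1 < p.2] [set j : 'I_mu | lam <= j].
  apply/setP => t; rewrite !inE; apply/imsetP/andP => [[e] | [lt_t lam_t]].
    by rewrite !inE -leqNgt => ? ->; split => //; apply: (valP e).
  by exists (exist _ t lt_t); rewrite // !inE -leqNgt.
by rewrite cardsX card_ltn_pairs card_ord_geq // mulnC.
Qed.

Lemma sum_demand k n mu (A : 'I_k -> {set edge n mu}) :
  \sum_i (2 - #|A i|) = 2 * nS A 0 + nS A 1.
Proof.
have sum_eq j : \sum_i (#|A i| == j : nat) = nS A j.
  rewrite /nS -[RHS]muln1 -sum_nat_cond_const [RHS]big_mkcond.
  by apply: eq_bigr => i _; case: (_ == _).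
rewrite (eq_bigr (fun i => 2 * (#|A i| == 0) + (#|A i| == 1))); last first.
  by move=> i _; case: #|A i| => [|[|c]].
by rewrite big_split /= -big_distrr /= !sum_eq.
Qed.

Section Extension.
Variables (n mu k : nat) (G H : {set edge n mu}) (A : 'I_k -> {set edge n mu}).

Lemma extendible2_demand :
  extendible 2 G H A -> \sum_i (2 - #|A i|) <= #|H :\: G|.
Proof.
case=> F [Astar [FHG [[disS cupS] _] AsG ge2]].
apply: (@leq_trans (\sum_i #|Astar i :\: G|)).
  by apply: leq_sum => i _; rewrite leq_subLR -(AsG i) cardsID ge2.
apply: leq_sum_card_disjoint => [i|i j neq_ij].
  by apply: subset_trans FHG; rewrite subDset -cupS (bigcup_sup i).
exact: disjointWl (subsetDl _ _) (disjointWr (subsetDl _ _) (disS i j neq_ij)).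
Qed.

Lemma extendible2_of_demand :
  path_decomposition G A -> \sum_i (2 - #|A i|) <= #|H :\: G| ->
  extendible 2 G H A.
Proof.
move=> [[disA cupA] pcA] /disjoint_subsets_of_card[Fs [FsHG cardFs disFs]].
have AG i : A i \subset G by rewrite -cupA; apply: (bigcup_sup i).
have disFG i : [disjoint Fs i & G] by have := FsHG i; rewrite subsetD => /andP[].
have disAF i j : [disjoint A i & Fs j].
  by rewrite disjoint_sym (disjointWr (AG i) (disFG j)).
have cardAF i : #|A i :|: Fs i| = maxn #|A i| 2.
  by rewrite cardsU disjoint_setI0 // cards0 subn0 cardFs maxnE.
exists (\bigcup_i Fs i), (fun i => A i :|: Fs i); split.
- by apply/bigcupsP => i _.
- split; [split|] => [i j neq_ij | | i].
  + rewrite -setI_eq0 setIUl !setIUr !disjoint_setI0 ?setU0 //.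
    * exact: disFs.
    * by rewrite disjoint_sym.
    * exact: disA.
  + by rewrite big_split /= cupA.
  + have [le2A | /ltnW leA2] := leqP 2 #|A i|.
      have -> : Fs i = set0 by apply: cards0_eq; rewrite cardFs; apply/eqP; rewrite subn_eq0.
      by rewrite setU0.
    by apply: paths_and_cycles_card2; rewrite cardAF; apply/maxn_idPr.
- by move=> i; rewrite setIUl (setIidPl (AG i)) disjoint_setI0 ?setU0.
- by move=> i; rewrite cardAF leq_maxr.
Qed.

End Extension.

Unset Implicit Arguments.

Theorem proposition3 (n lam mu : nat) (k : nat) (A : 'I_k -> {set edge n mu}) :
  0 < n -> 0 < lam -> lam < mu ->
  path_decomposition (lamK n mu lam) A ->
  (extendible 2 (lamK n mu lam) [set: edge n mu] A <->
   2 * nS A 0 + nS A 1 <= (mu - lam) * (n * (n - 1) %/ 2)).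
Proof.
move=> _ _ /ltnW le_lam_mu decA.
rewrite -sum_demand divn2 subn1 -bin2 -card_setC_lamK // -setTD.
by split; [apply: extendible2_demand | apply: extendible2_of_demand decA].
Qed.
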